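(* For the FCIQMC step $v_{t+1}=F(A,v_t)$ and $\xi_{t+1}=v_{t+1}-Av_t$, $$\mathbb{E}\bigl(\|\xi_{t+1}\|_2^2\mid\mathcal{F}_t\bigr)\le\Bigl(\max_{1\le k\le N}(\|a_k\|_0-2)\|a_{o,k}\|_2^2+\tfrac12\Bigr)\frac{\|v_t\|_1^2}{M_t},$$ where $a_k=A(:,k)$ is the $k$-th column of $A$, $a_{o,k}$ is the $k$-th column of $A_o$, and $M_t=\|v_t\|_1$.
   Context: Let $A\in\mathbb{R}^{N\times N}$ be real symmetric, with every diagonal entry nonzero and every column having at least 2 nonzero entries. Write $A=A_d+A_o$ with $A_d$ the diagonal part and $A_o$ the off-diagonal part; $\|x\|_0$ is the number of nonzero entries; $e_l$ the $l$-th standard basis vector. FCIQMC step: the current iterate $v_t\in\mathbb{Z}^N$ is represented by $M_t=\|v_t\|_1$ signed particles, $|v_t(k)|$ particles at location $k$ each with sign $\mathrm{sgn}(v_t(k))$ (so $v_t$ is the sum of $s_\alpha e_{l_\alpha}$ over particles $\alpha$ with location $l_\alpha$ and sign $s_\alpha$). For each particle $\alpha$ with location $k$ and sign $s$, independently of all other particles (conditionally on $\mathcal F_t$): (Spawning) choose $l$ uniformly at random among the $\|a_{o,k}\|_0$ indices $j$ with $A_o(j,k)\neq0$; let $Q=\|a_{o,k}\|_0|A(l,k)|$ and let $n=\lfloor Q\rfloor$ with probability $1-(Q-\lfloor Q\rfloor)$ and $n=\lfloor Q\rfloor+1$ with probability $Q-\lfloor Q\rfloor$; contribute $n\,\mathrm{sgn}(A(l,k)s)\,e_l$.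 (Diagonal cloning/death) independently, let $Q=|A(k,k)|$, $n$ chosen by the same rounding rule, and contribute $n\,\mathrm{sgn}(A(k,k)s)\,e_k$. (Annihilation) $v_{t+1}=F(A,v_t)$ is the sum of all contributions of all particles (particles of opposite sign at the same location cancel, so $v_{t+1}$ again has $\|v_{t+1}\|_1$ particles). $\mathcal{F}_t=\sigma(v_1,\dots,v_t)$. *)

From HB Require Import structures.
From mathcomp Require Import all_boot all_order all_algebra.
Set Implicit Arguments. Unset Strict Implicit. Unset Printing Implicit Defensive.
Import Order.TTheory GRing.Theory Num.Theory.
Local Open Scope ring_scope.

Section FCIQMC.
Variables (R : archiRealFieldType) (N : nat).
Implicit Types (A : 'M[R]_N) (v : 'I_N -> int).

Definition nnz_col A (k : 'I_N) : nat := #|[set i | A i k != 0]|.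
Definition nnz_off A (k : 'I_N) : nat := #|[set i | (i != k) && (A i k != 0)]|.
Definition sqnorm_off A (k : 'I_N) : R := \sum_(i < N | i != k) A i k ^+ 2.

Definition l1norm v : nat := \sum_(k < N) `|v k|%N.

Definition frac (x : R) : R := x - (Num.floor x)%:~R.
(* probability that the stochastic rounding of Q returns floor Q + b *)
Definition round_prob (Q : R) (b : bool) : R := if b then frac Q else 1 - frac Q.
Definition round_val (Q : R) (b : bool) : R := (Num.floor Q + b%:Z)%:~R.

Definition particles v : seq ('I_N * int) :=
  flatten [seq nseq `|v k|%N (k, Num.sg (v k)) | k <- enum 'I_N].
Definition npart v : nat := size (particles v).
Definition particle v (a : 'I_(npart v)) : 'I_N * int := tnth (in_tuple (particles v)) a.

(* random choices of one particle: spawn target l, spawn round-up bit, diagonal round-up bit *)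
Definition choice := ('I_N * bool * bool)%type.

Definition choice_prob A (k : 'I_N) (c : choice) : R :=
  let: (l, b, d) := c in
  (if (l != k) && (A l k != 0) then ((nnz_off A k)%:R)^-1 else 0)
  * round_prob ((nnz_off A k)%:R * `|A l k|) b
  * round_prob `|A k k| d.

Definition contrib A (k : 'I_N) (s : int) (c : choice) (i : 'I_N) : R :=
  let: (l, b, d) := c in
  round_val ((nnz_off A k)%:R * `|A l k|) b * Num.sg (A l k * s%:~R) * (i == l)%:R
  + round_val `|A k k| d * Num.sg (A k k * s%:~R) * (i == k)%:R.

Definition outcome v := {ffun 'I_(npart v) -> choice}.

Definition outcome_prob A v (w : outcome v) : R :=
  \prod_(a < npart v) choice_prob A (particle a).1 (w a).

(* v_{t+1} = F(A, v_t) for the outcome w (annihilation = summation) *)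
Definition Fstep A v (w : outcome v) (i : 'I_N) : R :=
  \sum_(a < npart v) contrib A (particle a).1 (particle a).2 (w a) i.

Definition Amulv A v (i : 'I_N) : R := \sum_(j < N) A i j * (v j)%:~R.

Definition xi A v (w : outcome v) (i : 'I_N) : R := Fstep A w i - Amulv A v i.

Definition exp_sq_err A v : R :=
  \sum_(w : outcome v) outcome_prob A w * \sum_(i < N) xi A w i ^+ 2.

End FCIQMC.

From Pilot Require Import Defs.
From HB Require Import structures.
From mathcomp Require Import all_boot all_order all_algebra.
From mathcomp Require Import ring lra.
Import Order.TTheory GRing.Theory Num.Theory.
Local Open Scope ring_scope.
Set Implicit Arguments. Unset Strict Implicit. Unset Printing Implicit Defensive.

(* Conditionally on v_t the particles act independently, and a particle at k
   with sign s contributes s a_k in expectation.  Hence xi_{t+1} is a sum of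
   independent centred vectors and E ||xi||^2 is the sum of the particle
   variances.  A particle's variance splits into the variance of the two
   stochastic roundings, at most 1/4 each, and the variance of the uniformly
   chosen spawning target, which is (m - 1) ||a_{o,k}||^2 with
   m = ||a_{o,k}||_0 = ||a_k||_0 - 1.  Summing over the M_t particles gives
   M_t (max_k (||a_k||_0 - 2) ||a_{o,k}||^2 + 1/2). *)

Section StochasticRounding.
Variable R : archiRealFieldType.
Implicit Types Q D x y : R.

Lemma round_val_true Q : round_val Q true = (Num.floor Q)%:~R + 1.
Proof. by rewrite /round_val intrD. Qed.

Lemma round_val_false Q : round_val Q false = (Num.floor Q)%:~R.
Proof. by rewrite /round_val addr0. Qed.

Lemma mul_compl_le_quarter x : x * (1 - x) <= 4^-1.
Proof.
have sq_ge0 : 0 <= (2 * x - 1) ^+ 2 by apply: sqr_ge0.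
have -> : x * (1 - x) = (1 - (2 * x - 1) ^+ 2) / 4 by field.
rewrite ler_pdivrMr // mulVf //; lra.
Qed.

Lemma sum_round_prob2 Q D :
  \sum_(b : bool) \sum_(d : bool) round_prob Q b * round_prob D d = 1.
Proof. rewrite !big_bool /round_prob /=; ring. Qed.

Lemma mean_round2 Q D x y : \sum_(b : bool) \sum_(d : bool)
   round_prob Q b * round_prob D d * (round_val Q b * x + round_val D d * y)
  = Q * x + D * y.
Proof.
by rewrite !big_bool /round_prob !round_val_true !round_val_false /Defs.frac /=; ring.
Qed.

Lemma second_moment_round2 Q D s1 x1 s2 x2 z : \sum_(b : bool) \sum_(d : bool)
   round_prob Q b * round_prob D d
   * ((round_val Q b * s1 - x1) ^+ 2 + (round_val D d * s2 - x2) ^+ 2 + z)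
  = s1 ^+ 2 * (Defs.frac Q * (1 - Defs.frac Q)) + (Q * s1 - x1) ^+ 2
    + s2 ^+ 2 * (Defs.frac D * (1 - Defs.frac D)) + (D * s2 - x2) ^+ 2 + z.
Proof.
by rewrite !big_bool /round_prob !round_val_true !round_val_false /Defs.frac /=; ring.
Qed.

End StochasticRounding.

Section IndependentChoices.
Variables (R : comPzRingType) (I C : finType) (p : I -> C -> R).
Hypothesis sum_p : forall a, \sum_c p a c = 1.

Lemma expect_mul_indep (F : I -> C -> R) a0 a1 :
  (forall a, \sum_c p a c * F a c = 0) ->
  \sum_(w : {ffun I -> C}) (\prod_a p a (w a)) * (F a0 (w a0) * F a1 (w a1))
  = if a0 == a1 then \sum_c p a0 c * F a0 c ^+ 2 else 0.
Proof.
move=> centred.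
pose at_ a0 a c := if a == a0 then F a0 c else 1.
have prod_at w a2 : \prod_a at_ a2 a (w a) = F a2 (w a2).
  by rewrite -big_mkcond big_pred1_eq.
transitivity (\sum_(w : {ffun I -> C})
               \prod_a (p a (w a) * (at_ a0 a (w a) * at_ a1 a (w a)))).
  by apply: eq_bigr => w _; rewrite !big_split /= !prod_at.
rewrite -(bigA_distr_bigA (fun a c => p a c * (at_ a0 a c * at_ a1 a c))).
rewrite (bigD1 a0) //= /at_ eqxx.
case: eqP => [<-|_].
  rewrite [X in _ * X]big1 ?mulr1; first by apply: eq_bigr => c _; rewrite expr2.
  by move=> a /negPf ->; under eq_bigr do rewrite !mulr1; apply: sum_p.
by under eq_bigr do rewrite mulr1; rewrite centred mul0r.
Qed.

Lemma expect_sqr_sum_indep (F : I -> C -> R) :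
  (forall a, \sum_c p a c * F a c = 0) ->
  \sum_(w : {ffun I -> C}) (\prod_a p a (w a)) * (\sum_a F a (w a)) ^+ 2
  = \sum_a \sum_c p a c * F a c ^+ 2.
Proof.
move=> centred.
have mul_sqr_sum (P : R) (x : I -> R) :
    P * (\sum_a x a) ^+ 2 = \sum_a0 \sum_a1 P * (x a0 * x a1).
  rewrite expr2 mulr_suml mulr_sumr; apply: eq_bigr => a0 _.
  by rewrite !mulr_sumr.
under eq_bigr do rewrite mul_sqr_sum.
rewrite exchange_big; under eq_bigr do rewrite exchange_big.
apply: eq_bigr => a0 _; rewrite (bigD1 a0) //= [X in _ + X]big1 ?addr0.
  by rewrite (expect_mul_indep a0 a0 centred) eqxx.
by move=> a1 ne; rewrite (expect_mul_indep a0 a1 centred) eq_sym (negPf ne).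
Qed.

End IndependentChoices.

Section Particles.
Variables (R : archiRealFieldType) (N : nat).
Implicit Types (A : 'M[R]_N) (v : 'I_N -> int).

Lemma mem_particles v x :
  x \in particles v -> x.2 = Num.sg (v x.1) /\ v x.1 != 0.
Proof.
move=> /flattenP [s /mapP [k _ ->]]; rewrite mem_nseq => /andP [vk /eqP ->] /=.
by rewrite -absz_eq0 -lt0n.
Qed.

Lemma particle_sign v (a : 'I_(npart v)) :
  (particle a).2 = 1 \/ (particle a).2 = -1.
Proof.
have [-> vk] := mem_particles (mem_tnth a (in_tuple (particles v))).
by case: ltrgtP vk => [/ltr0_sg ->|/gtr0_sg ->|->]; [right|left|].
Qed.

Lemma npart_l1norm v : npart v = l1norm v.
Proof.
rewrite /npart /particles size_flatten /shape -map_comp sumnE big_map big_enum.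
by apply: eq_bigr => k _; rewrite /= size_nseq.
Qed.

Lemma Amulv_particles A v i :
  Amulv A v i = \sum_(a < npart v) ((particle a).2)%:~R * A i (particle a).1.
Proof.
rewrite (_ : \sum_a _ = \sum_(x <- particles v) (x.2)%:~R * A i x.1);
  last by rewrite [RHS]big_tnth.
rewrite big_flatten big_map big_enum /Amulv; apply: eq_bigr => k _.
rewrite big_nseq iter_addr_0 /= [v k in LHS]numEsg intrM -abszE -mulr_natr.
have -> : (`|v k|%N%:Z)%:~R = (`|v k|%N)%:R :> R by [].
by rewrite mulrA [A i k * _]mulrC.
Qed.

End Particles.

Section OneParticle.
Variables (R : archiRealFieldType) (N : nat) (A : 'M[R]_N) (k : 'I_N).

(* Taking the sign to be 1 loses nothing: see [contrib_signE]. *)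
Definition contrib_var : R :=
  \sum_c choice_prob A k c * \sum_i (contrib A k 1 c i - A i k) ^+ 2.

Definition spawn_prob (l : 'I_N) : R :=
  if (l != k) && (A l k != 0) then ((nnz_off A k)%:R)^-1 else 0.

Definition spawn_val (l : 'I_N) : R := (nnz_off A k)%:R * `|A l k|.

Lemma sum_choiceE (G : choice N -> R) :
  \sum_c G c = \sum_l \sum_(b : bool) \sum_(d : bool) G (l, b, d).
Proof.
transitivity (\sum_(x : 'I_N * bool) \sum_(d : bool) G (x, d)).
  by rewrite pair_bigA; apply: eq_bigr => -[x d].
rewrite (pair_bigA _ (fun l b => \sum_(d : bool) G (l, b, d))).
by apply: eq_bigr => -[x d].
Qed.

Lemma expect_choiceE (G : choice N -> R) :
  \sum_c choice_prob A k c * G c =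
  \sum_l spawn_prob l * \sum_(b : bool) \sum_(d : bool)
      (round_prob (spawn_val l) b * round_prob `|A k k| d * G (l, b, d)).
Proof.
rewrite sum_choiceE; apply: eq_bigr => l _.
rewrite mulr_sumr; apply: eq_bigr => b _; rewrite mulr_sumr; apply: eq_bigr => d _.
by rewrite /choice_prob /spawn_prob /spawn_val; ring.
Qed.

Lemma contrib_pos l b d i : contrib A k 1 (l, b, d) i =
  round_val (spawn_val l) b * (Num.sg (A l k) * (i == l)%:R)
  + round_val `|A k k| d * (Num.sg (A k k) * (i == k)%:R).
Proof. by rewrite /contrib /spawn_val !mulr1 !mulrA. Qed.

Lemma sqr_contrib_err l b d : l != k ->
  \sum_i (contrib A k 1 (l, b, d) i - A i k) ^+ 2 =
  (round_val (spawn_val l) b * Num.sg (A l k) - A l k) ^+ 2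
  + (round_val `|A k k| d * Num.sg (A k k) - A k k) ^+ 2
  + (sqnorm_off A k - A l k ^+ 2).
Proof.
move=> lk; under eq_bigr do rewrite contrib_pos.
rewrite (bigD1 l) //= (bigD1 k) /=; last by rewrite eq_sym.
rewrite eqxx (negPf lk) eq_sym (negPf lk) /sqnorm_off (bigD1 l lk) /=.
rewrite [in RHS](eq_bigl (fun i => (i != l) && (i != k))) => [|i]; last first.
  by rewrite andbC.
rewrite (eq_bigr (fun i => A i k ^+ 2)); last first.
  by move=> i /andP[/negPf -> /negPf ->]; rewrite !mulr0 addr0 sub0r sqrrN.
by rewrite eqxx !mulr0 !mulr1 !addr0 add0r; ring.
Qed.

Hypothesis off_gt0 : (0 < nnz_off A k)%N.

Lemma nnz_off_neq0 : (nnz_off A k)%:R != 0 :> R.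
Proof. by rewrite pnatr_eq0 -lt0n. Qed.

Lemma sum_spawn_prob (H : 'I_N -> R) :
  \sum_l spawn_prob l * H l =
  ((nnz_off A k)%:R)^-1 * \sum_(l | (l != k) && (A l k != 0)) H l.
Proof.
rewrite mulr_sumr [RHS]big_mkcond; apply: eq_bigr => l _; rewrite /spawn_prob.
by case: ifP; rewrite ?mul0r ?mulr0.
Qed.

Lemma sum_spawn_prob1 : \sum_l spawn_prob l = 1.
Proof.
under eq_bigr do rewrite -[spawn_prob _]mulr1.
rewrite sum_spawn_prob sumr_const (_ : #|_| = nnz_off A k).
  by rewrite mulVf // nnz_off_neq0.
by rewrite /nnz_off cardsE.
Qed.

Lemma sum_off_support (f : 'I_N -> R) : (forall l, A l k = 0 -> f l = 0) ->
  \sum_(l | (l != k) && (A l k != 0)) f l = \sum_(l | l != k) f l.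
Proof.
by move=> f0; rewrite big_mkcondr; apply: eq_bigr => l _; case: eqP => [/f0 ->|].
Qed.

Lemma sum_choice_prob : \sum_c choice_prob A k c = 1.
Proof.
under eq_bigr do rewrite -[choice_prob _ _ _]mulr1.
rewrite expect_choiceE -[RHS]sum_spawn_prob1; apply: eq_bigr => l _.
by under eq_bigr do under eq_bigr do rewrite mulr1; rewrite sum_round_prob2 mulr1.
Qed.

Lemma mean_contrib i : \sum_c choice_prob A k c * contrib A k 1 c i = A i k.
Proof.
have abs_sg (x e : R) : `|x| * (Num.sg x * e) = x * e.
  by rewrite mulrA (mulrC `|x|) -numEsg.
rewrite expect_choiceE.
under eq_bigr do under eq_bigr do under eq_bigr do rewrite contrib_pos.
under eq_bigr do rewrite mean_round2 mulrDr.
rewrite big_split /= -mulr_suml sum_spawn_prob1 mul1r sum_spawn_prob.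
rewrite sum_off_support; last by move=> l ->; rewrite sgr0 !mul0r mulr0.
under eq_bigr do rewrite /spawn_val -mulrA abs_sg.
rewrite abs_sg -mulr_sumr mulrA mulVf ?nnz_off_neq0 // mul1r.
rewrite big_mkcond (bigD1 i) //= big1 => [|l /negPf il]; last first.
  by rewrite (eq_sym i l) il mulr0; case: ifP.
case: (eqVneq i k) => [->|_]; rewrite /= ?eqxx.
  by rewrite mulr1 !add0r.
by rewrite mulr0 mulr1 !addr0.
Qed.

Hypothesis diag_neq0 : A k k != 0.

Lemma contrib_var_le :
  contrib_var <= ((nnz_off A k)%:R - 1) * sqnorm_off A k + 2^-1.
Proof.
set m := (nnz_off A k)%:R; set s := sqnorm_off A k.
have abs_sg (x : R) : `|x| * Num.sg x = x by rewrite mulrC -numEsg.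
pose B l := 2^-1 + s + (m ^+ 2 - 2 * m) * A l k ^+ 2.
apply: (@le_trans _ _ (\sum_l spawn_prob l * B l)).
  rewrite /contrib_var expect_choiceE; apply: ler_sum => l _.
  rewrite /spawn_prob; case: ifP => [/andP [lk lk0]|_]; last by rewrite !mul0r.
  rewrite ler_wpM2l ?invr_ge0 ?ler0n //.
  under eq_bigr do under eq_bigr do rewrite (sqr_contrib_err _ _ lk).
  rewrite second_moment_round2 !sqr_sg lk0 diag_neq0 !mul1r abs_sg subrr.
  rewrite expr0n addr0 /spawn_val -mulrA abs_sg /B.
  have q1 := mul_compl_le_quarter (Defs.frac (m * `|A l k|)).
  have q2 := mul_compl_le_quarter (Defs.frac `|A k k|).
  have quarters : (4 : R)^-1 + 4^-1 = 2^-1 by field.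
  have -> : (m * A l k - A l k) ^+ 2 = (m ^+ 2 - 2 * m) * A l k ^+ 2 + A l k ^+ 2.
    by ring.
  rewrite -/m -/s; lra.
under eq_bigr do rewrite mulrDr.
rewrite big_split /= -mulr_suml sum_spawn_prob1 mul1r sum_spawn_prob.
rewrite sum_off_support; last by move=> l ->; rewrite expr0n /= mulr0.
rewrite -mulr_sumr -/s.
have -> : m^-1 * ((m ^+ 2 - 2 * m) * s) = (m - 2) * s by field; apply: nnz_off_neq0.
lra.
Qed.

End OneParticle.

Section FCIQMCStep.
Variables (R : archiRealFieldType) (N : nat).
Implicit Types (A : 'M[R]_N) (v : 'I_N -> int).

Lemma nnz_colE A k : A k k != 0 -> nnz_col A k = (nnz_off A k).+1.
Proof.
move=> Akk; rewrite /nnz_col /nnz_off.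
rewrite (_ : [set i | A i k != 0] = k |: [set i | (i != k) && (A i k != 0)]).
  by rewrite cardsU1 inE eqxx.
by apply/setP => i; rewrite !inE; case: (eqVneq i k) => [->|]; rewrite ?Akk.
Qed.

Lemma contrib_var_le_col A k : A k k != 0 -> (2 <= nnz_col A k)%N ->
  contrib_var A k <= ((nnz_col A k)%:R - 2) * sqnorm_off A k + 2^-1.
Proof.
move=> Akk; rewrite nnz_colE // ltnS => off_gt0.
by rewrite -addn1 natrD -addrA (_ : 1 - 2 = - 1 :> R) ?contrib_var_le //; ring.
Qed.

Lemma contrib_signE A k (s : int) c i : s = 1 \/ s = -1 ->
  contrib A k s c i = s%:~R * contrib A k 1 c i.
Proof.
case=> ->; case: c => [[l b] d]; rewrite /contrib ?mul1r //.
by rewrite mulrN1z !mulrN1 !sgrN !mulr1; ring.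
Qed.

Lemma exp_sq_err_sum_var A v : (forall k, 0 < nnz_off A k)%N ->
  exp_sq_err A v = \sum_(a < npart v) contrib_var A (particle a).1.
Proof.
move=> off_gt0.
pose p (a : 'I_(npart v)) := choice_prob A (particle a).1.
pose err (a : 'I_(npart v)) c i :=
  contrib A (particle a).1 1 c i - A i (particle a).1.
pose Y (a : 'I_(npart v)) c i := ((particle a).2)%:~R * err a c i.
have YE a c i : Y a c i = contrib A (particle a).1 (particle a).2 c i
                          - ((particle a).2)%:~R * A i (particle a).1.
  by rewrite /Y /err mulrBr -contrib_signE //; apply: particle_sign.
have Y_sqr a c i : Y a c i ^+ 2 = err a c i ^+ 2.
  rewrite exprMn; case: (particle_sign a) => ->;
  by rewrite ?mulrN1z ?sqrrN expr1n mul1r.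
have Y_centred i a : \sum_c p a c * Y a c i = 0.
  under eq_bigr do rewrite mulrCA; rewrite -mulr_sumr /err.
  under eq_bigr do rewrite mulrBr; rewrite sumrB -mulr_suml mean_contrib //.
  by rewrite sum_choice_prob // mul1r subrr mulr0.
transitivity (\sum_i \sum_a \sum_c p a c * Y a c i ^+ 2).
  rewrite /exp_sq_err; under eq_bigr do rewrite mulr_sumr; rewrite exchange_big.
  apply: eq_bigr => i _; rewrite -(expect_sqr_sum_indep _ (Y_centred i)).
    apply: eq_bigr => w _; congr (_ * _ ^+ 2).
    rewrite /xi Amulv_particles /Fstep -sumrB.
    by apply: eq_bigr => a _; rewrite YE.
  by move=> a; apply: sum_choice_prob.
rewrite exchange_big; apply: eq_bigr => a _.
rewrite exchange_big /contrib_var; apply: eq_bigr => c _.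
by rewrite mulr_sumr; apply: eq_bigr => i _; rewrite Y_sqr.
Qed.

End FCIQMCStep.

Unset Implicit Arguments.
Theorem mainTheorem4 (R : archiRealFieldType) (N : nat) (A : 'M[R]_N)
  (v : 'I_N -> int)
  (Hsym : A^T = A)
  (Hdiag : forall k : 'I_N, A k k != 0)
  (Hcol : forall k : 'I_N, (2 <= nnz_col A k)%N) :
  exp_sq_err A v <=
    (\big[Num.max/0]_(k < N)
        (((nnz_col A k)%:R - 2) * sqnorm_off A k) + 2^-1)
    * ((l1norm v)%:R ^+ 2 / (l1norm v)%:R).
Proof.
have off_gt0 k : (0 < nnz_off A k)%N by have := Hcol k; rewrite nnz_colE ?Hdiag.
have -> : ((l1norm v)%:R ^+ 2 / (l1norm v)%:R : R) = (l1norm v)%:R.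
  have [->|M_neq0] := eqVneq (l1norm v) 0%N; first by rewrite expr0n mul0r.
  by rewrite expr2 mulfK // pnatr_eq0.
set K := \big[Num.max/0]_(k < N) _.
rewrite exp_sq_err_sum_var // -npart_l1norm mulr_natr.
apply: le_trans (_ : _ <= \sum_(a < npart v) (K + 2^-1)) _; last first.
  by rewrite sumr_const card_ord.
apply: ler_sum => a _; set k := (particle a).1.
apply: le_trans (contrib_var_le_col (Hdiag k) (Hcol k)) _; rewrite lerD2r.
exact: (le_bigmax 0 (fun k => ((nnz_col A k)%:R - 2) * sqnorm_off A k) k).
Qed.
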